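(* Let $F$ be a minimally unsatisfiable clause-set with no 1-singular variables. Then the sets of variables of maximal singular tuples for $F$ are exactly the minimal transversals of the singularity hypergraph $\mathrm{shyp}(F)$ (the inclusion-minimal sets of vertices meeting every hyperedge), and the maximal singular tuples for $F$ are exactly the arbitrary linear orderings of these minimal transversals.
   Context: Literals are variables $v$ and complements $\overline{v}$; a clause is a finite set of literals with no complementary pair; a clause-set is a finite set of clauses; $\mathrm{var}(F)$ is the set of variables of $F$ and $\mathrm{var}(L)$ the set of variables underlying a literal set $L$; $\mathrm{ldeg}_F(x)$ is the number of clauses of $F$ containing literal $x$. $\mathrm{DP}_v(F) := \{C \in F : v \notin \mathrm{var}(C)\} \cup \{(C \cup D)\setminus\{v,\overline{v}\} : C, D \in F,\ C \cap \overline{D} = \{v\}\}$; $\mathrm{DP}_{v_1,\dots,v_k}(F)$ applies these in order. A variable $v$ is singular for $F$ if $\min(\mathrm{ldeg}_F(v),\mathrm{ldeg}_F(\overline{v}))=1$; it is 1-singular if $\mathrm{ldeg}_F(v)=\mathrm{ldeg}_F(\overline{v})=1$; $F$ is nonsingular if it has no singular variables. For minimally unsatisfiable $F$, a tuple $(v_1,\dots,v_n)$ is a singular tuple for $F$ if each $v_i$ is singular for $\mathrm{DP}_{v_1,\dots,v_{i-1}}(F)$, and it is maximal if $\mathrm{DP}_{v_1,\dots,v_n}(F)$ is nonsingular. When $F$ has no 1-singular variables, each singular variable $v$ has a unique singular literal $x_v$ (the literal of $v$ with $\mathrm{ldeg}_F(x_v)=1$); let $L$ be the set of these. The singularity hypergraph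 $\mathrm{shyp}(F)$ has vertex set $\mathrm{var}(F)$ and hyperedges $\mathrm{var}(C\cap L)$ for all $C\in F$ with $C\cap L\neq\emptyset$. *)

From mathcomp Require Import all_boot.
Set Implicit Arguments. Unset Strict Implicit. Unset Printing Implicit Defensive.

(* Variables range over a finite type V.  A literal is a pair (v, b):
   (v, true) is the positive literal v, (v, false) its complement. *)
Section Clauses.
Variable V : finType.

Definition lit := (V * bool)%type.
Definition compl (x : lit) : lit := (x.1, ~~ x.2).
Definition compl_set (C : {set lit}) : {set lit} := [set compl x | x in C].
Definition varC (C : {set lit}) : {set V} := [set x.1 | x in C].
Definition varF (F : {set {set lit}}) : {set V} := \bigcup_(C in F) varC C.

Definition is_clause (C : {set lit}) : bool := [forall x in C, compl x \notin C].
Definition is_clauseset (F : {set {set lit}}) : bool := [forall C in F, is_clause C].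

Definition ldeg (F : {set {set lit}}) (x : lit) : nat := #|[set C in F | x \in C]|.

Definition DP (v : V) (F : {set {set lit}}) : {set {set lit}} :=
  [set C in F | v \notin varC C] :|:
  [set (C :|: D) :\: [set (v, true); (v, false)] | C in F, D in F
     & C :&: compl_set D == [set (v, true)]].

Definition DPs (s : seq V) (F : {set {set lit}}) : {set {set lit}} :=
  foldl (fun G v => DP v G) F s.

Definition satisfies (a : V -> bool) (F : {set {set lit}}) : Prop :=
  forall C, C \in F -> exists2 x, x \in C & a x.1 = x.2.
Definition satisfiable (F : {set {set lit}}) : Prop := exists a : V -> bool, satisfies a F.
Definition min_unsat (F : {set {set lit}}) : Prop :=
  ~ satisfiable F /\ forall C, C \in F -> satisfiable (F :\ C).

Definition singular (F : {set {set lit}}) (v : V) : bool :=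
  minn (ldeg F (v, true)) (ldeg F (v, false)) == 1.
Definition one_singular (F : {set {set lit}}) (v : V) : bool :=
  (ldeg F (v, true) == 1) && (ldeg F (v, false) == 1).
Definition nonsingular (F : {set {set lit}}) : Prop := forall v, ~~ singular F v.

Fixpoint singular_tuple (F : {set {set lit}}) (s : seq V) : Prop :=
  match s with
  | [::] => True
  | v :: s' => singular F v /\ singular_tuple (DP v F) s'
  end.
Definition maximal_singular_tuple (F : {set {set lit}}) (s : seq V) : Prop :=
  singular_tuple F s /\ nonsingular (DPs s F).

(* the singular literals L (meaningful when F has no 1-singular variables) *)
Definition sing_lits (F : {set {set lit}}) : {set lit} :=
  [set x | singular F x.1 & ldeg F x == 1].

(* hyperedges of shyp(F); its vertex set is varF F *)
Definition shyp_edges (F : {set {set lit}}) : {set {set V}} :=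
  [set varC (C :&: sing_lits F) | C in F & C :&: sing_lits F != set0].

Definition is_transversal (F : {set {set lit}}) (T : {set V}) : Prop :=
  T \subset varF F /\ forall E, E \in shyp_edges F -> E :&: T != set0.
Definition is_min_transversal (F : {set {set lit}}) (T : {set V}) : Prop :=
  is_transversal F T /\ forall T' : {set V}, T' \proper T -> ~ is_transversal F T'.

End Clauses.

From mathcomp Require Import all_boot zify.
Set Implicit Arguments. Unset Strict Implicit. Unset Printing Implicit Defensive.

(* Let [v] be singular for a minimally unsatisfiable [F] without 1-singular
   variables: its singular literal [x] lies in exactly one clause [C], and
   [compl x] in at least two clauses.  Minimal unsatisfiability forces [C] to
   clash with every partner [D] (clause containing [compl x]) exactly on [v],
   distinct partners to give distinct resolvents, and no resolvent to be a clause
   of [F] already.  Hence [DP v F] is again minimally unsatisfiable, literals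
   outside [C] keep their degree and those of [C] get degree at least 2: the
   singular literals of [DP v F] are those of [F] outside [C], and shyp loses
   exactly the edge of [C], the one through [v].
   Without 1-singular variables the edges of shyp are pairwise disjoint, so the
   maximal singular tuples are the orderings of the sets meeting every edge in
   exactly one vertex, and for a disjoint hypergraph these are exactly the
   minimal transversals. *)

Section Literals.
Variable V : finType.
Implicit Types (F G : {set {set lit V}}) (C D E : {set lit V}) (y z : lit V).

Lemma complK : involutive (@compl V).
Proof. by case=> a b; rewrite /compl /= negbK. Qed.

Lemma compl_inj : injective (@compl V).
Proof. exact: inv_inj complK. Qed.

Lemma in_compl_set y D : (y \in compl_set D) = (compl y \in D).
Proof.
apply/imsetP/idP => [[z Hz ->]|H]; first by rewrite complK.
by exists (compl y); rewrite ?complK.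
Qed.

Lemma varCP w E : reflect (exists2 z, z \in E & z.1 = w) (w \in varC E).
Proof. by apply: (iffP imsetP) => [[z Hz ->]|[z Hz <-]]; exists z. Qed.

Lemma mem_varC E z : z \in E -> z.1 \in varC E.
Proof. by move=> Hz; apply/varCP; exists z. Qed.

Lemma same_var_lit y z : y.1 = z.1 -> z = y \/ z = compl y.
Proof. by case: y z => a b [c d] /= ->; case: b; case: d; rewrite /compl /=; auto. Qed.

Lemma in_var_pair (v : V) y : (y \in [set (v, true); (v, false)]) = (y.1 == v).
Proof.
by case: y => a b; rewrite !inE !xpair_eqE /=; case: b; rewrite ?andbT ?andbF ?orbF.
Qed.

Lemma clause_compl_notin E y : is_clause E -> y \in E -> compl y \notin E.
Proof. by move=> /forall_inP H /H. Qed.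

Lemma clauseset_clause F E : is_clauseset F -> E \in F -> is_clause E.
Proof. by move=> /forall_inP H /H. Qed.

Lemma clash_sym C D y :
  C :&: compl_set D = [set y] -> D :&: compl_set C = [set compl y].
Proof.
move/setP=> H; apply/setP => z; have := H (compl z).
rewrite !inE !in_compl_set complK andbC => ->.
by rewrite -{1}[y]complK (inj_eq compl_inj).
Qed.

Lemma ldeg1_clause F y : ldeg F y = 1 -> exists2 E, E \in F & y \in E.
Proof.
rewrite /ldeg => /eqP /cards1P [C0 HC0].
have: C0 \in [set C in F | y \in C] by rewrite HC0 set11.
by rewrite inE => /andP[]; exists C0.
Qed.

Lemma ldeg1_clause_uniq F y E E' : ldeg F y = 1 ->
  E \in F -> y \in E -> E' \in F -> y \in E' -> E' = E.
Proof.
rewrite /ldeg => /eqP /cards1P [C0 HC0] HE HyE HE' HyE'.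
have: E \in [set C in F | y \in C] by rewrite inE HE HyE.
have: E' \in [set C in F | y \in C] by rewrite inE HE' HyE'.
by rewrite HC0 !inE => /eqP -> /eqP ->.
Qed.

Lemma ldeg_gt0 F y E : E \in F -> y \in E -> 0 < ldeg F y.
Proof. by move=> HE Hy; apply/card_gt0P; exists E; rewrite inE HE Hy. Qed.

Lemma singular_lit F z : singular F z.1 = (minn (ldeg F z) (ldeg F (compl z)) == 1).
Proof. by case: z => a [|]; rewrite /singular /compl //= minnC. Qed.

Lemma sing_litsE F z : (z \in sing_lits F) = singular F z.1 && (ldeg F z == 1).
Proof. by rewrite inE. Qed.

Lemma sing_lit_clause_uniq F z E E' : z \in sing_lits F ->
  E \in F -> z \in E -> E' \in F -> z \in E' -> E' = E.
Proof. by rewrite sing_litsE => /andP[_ /eqP]; apply: ldeg1_clause_uniq. Qed.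

(* A variable that is not 1-singular has at most one singular literal. *)
Lemma sing_var_clause_uniq F z z' E E' : (forall w, ~~ one_singular F w) ->
  E \in F -> z \in E :&: sing_lits F -> E' \in F -> z' \in E' :&: sing_lits F ->
  z.1 = z'.1 -> E' = E.
Proof.
move=> Hno HE /setIP[Hz Hzs] HE' /setIP[Hz' Hz's] /same_var_lit[Ez|Ez].
  by apply: (sing_lit_clause_uniq Hzs) => //; rewrite -Ez.
move: (Hno z.1) Hzs Hz's; rewrite Ez !sing_litsE /one_singular.
case: z {Ez Hz} => a b /= /negP Hn /andP[_ H1] /andP[_ H2].
by rewrite /compl /= in H2; exfalso; apply: Hn; case: b H1 H2 => /= -> ->.
Qed.

Lemma unsat_removed_falsified F D a : ~ satisfiable F -> D \in F ->
  satisfies a (F :\ D) -> forall z, z \in D -> a z.1 != z.2.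
Proof.
move=> HF HD Ha z Hz; apply/negP => /eqP Hza; apply: HF; exists a => E HE.
by case: (eqVneq E D) => [->|ne]; [exists z | apply: Ha; rewrite !inE ne].
Qed.

End Literals.

Section SingularElimination.
Variable V : finType.
Variables (G : {set {set lit V}}) (v : V) (x : lit V) (C : {set lit V}).
Hypotheses (HG : is_clauseset G) (HMU : min_unsat G) (Hxv : x.1 = v)
  (HC : C \in G) (HxC : x \in C) (Hdx : ldeg G x = 1)
  (Hk : 2 <= ldeg G (compl x)) (Hno : forall w, ~~ one_singular G w).
Implicit Types (A B D E : {set lit V}) (y z : lit V).

Definition resolvent D := (C :|: D) :\: [set (v, true); (v, false)].
Definition partners := [set D in G | compl x \in D].

Lemma clause_with_x E : E \in G -> x \in E -> E = C.
Proof. by move=> HE HxE; apply: (ldeg1_clause_uniq Hdx HC HxC). Qed.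

Lemma lit_of_v y : y.1 = v -> y = x \/ y = compl x.
Proof. by move=> Hy; apply: same_var_lit; rewrite Hy. Qed.

Lemma complx_notin_C : compl x \notin C.
Proof. exact: clause_compl_notin (clauseset_clause HG HC) HxC. Qed.

Lemma v_in_C : v \in varC C.
Proof. by rewrite -Hxv; apply: mem_varC HxC. Qed.

Lemma partnersP D : D \in partners -> [/\ D \in G, compl x \in D, x \notin D & D != C].
Proof.
rewrite inE => /andP[HD Hc]; split => //.
  by rewrite -[x]complK; apply: clause_compl_notin (clauseset_clause HG HD) Hc.
by apply: contraTneq Hc => ->; apply: complx_notin_C.
Qed.

Lemma in_resolvent D y : (y \in resolvent D) = ((y \in C) || (y \in D)) && (y.1 != v).
Proof. by rewrite /resolvent in_setD in_var_pair in_setU andbC. Qed.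

Lemma var_v_clause E : v \in varC E -> x \in E \/ compl x \in E.
Proof. by move=> /varCP [z Hz /lit_of_v [] <-]; auto. Qed.

Lemma clash_v A B (b : bool) : A \in G -> B \in G -> A :&: compl_set B = [set (v, b)] ->
  (A = C /\ B \in partners) \/ (B = C /\ A \in partners).
Proof.
move=> HA HB /setP /(_ (v, b)); rewrite !inE in_compl_set eqxx.
case/andP; case: (lit_of_v (erefl : (v, b).1 = v)) => -> HA1 HB1.
  by left; rewrite HB HB1 (clause_with_x HA HA1).
by rewrite complK in HB1; right; rewrite HA HA1 (clause_with_x HB HB1).
Qed.

(* Otherwise setting [v] against [x] would satisfy [G]. *)
Lemma C_false_off_v a :
  (forall E, E \in G -> v \notin varC E -> exists2 z, z \in E & a z.1 = z.2) ->
  forall y, y \in C -> y.1 != v -> a y.1 != y.2.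
Proof.
move=> Ha y Hy Hyv; apply/eqP => Hay; apply: HMU.1.
exists (fun u => if u == v then (compl x).2 else a u) => E HE.
case: (boolP (v \in varC E)) => [/var_v_clause [HxE|HcE]|Hn].
- by rewrite (clause_with_x HE HxE); exists y; rewrite // (negbTE Hyv).
- by exists (compl x); rewrite //= Hxv eqxx.
- case: (Ha E HE Hn) => z Hz Haz; exists z; rewrite // ifN //.
  by apply: contraNneq Hn => <-; apply: mem_varC Hz.
Qed.

Lemma sat_removed_partner_off_v a D : D \in partners -> satisfies a (G :\ D) ->
  forall E, E \in G -> v \notin varC E -> exists2 z, z \in E & a z.1 = z.2.
Proof.
case/partnersP => _ HcD _ _ Ha E HE Hv; apply: Ha; rewrite !inE HE andbT.
by apply: contraNneq Hv => ->; rewrite -Hxv; apply: mem_varC HcD.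
Qed.

Lemma C_clash_partner D : D \in partners -> C :&: compl_set D = [set x].
Proof.
move=> HD; case/partnersP: (HD) => HDG HcD HxD HDC.
apply/setP => y; rewrite !inE in_compl_set.
case: (eqVneq y x) => [->|ne]; first by rewrite HxC HcD.
apply/negP => /andP[HyC HcyD].
have [a Ha] := HMU.2 D HDG.
have Hyv : y.1 != v.
  apply/eqP => /lit_of_v [Ey|Ey]; first by rewrite Ey eqxx in ne.
  by move: complx_notin_C; rewrite -Ey HyC.
move: (C_false_off_v (sat_removed_partner_off_v HD Ha) HyC Hyv).
move: (unsat_removed_falsified HMU.1 HDG Ha HcyD).
by rewrite /compl /=; case: (a y.1); case: (y.2).
Qed.

(* An assignment satisfying [G :\ D] falsifies [D] and, by [C_false_off_v], every
   literal of [C] off [v]; it satisfies [E], necessarily outside [C :|: D]. *)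
Lemma partner_off_v_uncovered D E : D \in partners -> E \in G -> E != D -> x \notin E ->
  ~ (forall z, z \in E -> z.1 != v -> (z \in C) || (z \in D)).
Proof.
move=> HD HE ne HxE Hsub; case/partnersP: (HD) => HDG HcD _ _.
have [a Ha] := HMU.2 D HDG.
have Hf := unsat_removed_falsified HMU.1 HDG Ha.
have [z Hz Haz] : exists2 z, z \in E & a z.1 = z.2 by apply: Ha; rewrite !inE ne.
case: (eqVneq z.1 v) => [/lit_of_v [Ez|Ez]|Hzv].
- by move: HxE; rewrite -Ez Hz.
- by move: (Hf _ HcD); rewrite -Ez Haz eqxx.
case/orP: (Hsub z Hz Hzv) => Hz'.
  by move: (C_false_off_v (sat_removed_partner_off_v HD Ha) Hz' Hzv); rewrite Haz eqxx.
by move: (Hf _ Hz'); rewrite Haz eqxx.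
Qed.

Lemma resolvent_inj : {in partners &, injective resolvent}.
Proof.
move=> D1 D2 H1 H2 Hr; apply/eqP/negPn/negP => ne.
case/partnersP: (H2) => H2G _ Hx2 _.
apply: (partner_off_v_uncovered H1 H2G) => //; first by rewrite eq_sym.
move=> z Hz Hzv; have: z \in resolvent D2 by rewrite in_resolvent Hz orbT Hzv.
by rewrite -Hr in_resolvent => /andP[].
Qed.

Lemma resolvent_fresh D E : D \in partners -> E \in G -> v \notin varC E ->
  resolvent D != E.
Proof.
move=> HD HE Hv; apply/eqP => Hr; case/partnersP: (HD) => _ HcD _ _.
apply: (partner_off_v_uncovered HD HE).
- by apply: contraNneq Hv => ->; rewrite -Hxv; apply: mem_varC HcD.
- by apply: contra Hv => Hx; rewrite -Hxv; apply: mem_varC Hx.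
- by move=> z; rewrite -Hr in_resolvent => /andP[].
Qed.

Lemma in_DP E : E \in DP v G <->
  (E \in G /\ v \notin varC E) \/ exists2 D, D \in partners & E = resolvent D.
Proof.
rewrite /DP inE; split.
  case/orP => [|/imset2P[A B HA]]; first by rewrite inE => /andP[]; left.
  rewrite inE => /andP[HB /eqP /(clash_v HA HB)] [[-> HBp]|[-> HAp]] ->; right.
    by exists B.
  by exists A; rewrite // /resolvent setUC.
case=> [[HE Hv]|[D HD ->]]; first by rewrite inE HE Hv.
apply/orP; right; apply/imset2P.
have HCD := C_clash_partner HD; case/partnersP: HD => HDG _ _ _.
have Ex : x = (v, x.2) by rewrite -Hxv -surjective_pairing.
case Hb: x.2 Ex => Ex.
  by apply: (@Imset2spec _ _ _ _ _ _ _ C D) => //; rewrite inE HDG HCD Ex eqxx.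
apply: (@Imset2spec _ _ _ _ _ _ _ D C) => //; last by rewrite /resolvent setUC.
by rewrite inE HC (clash_sym HCD) Ex eqxx.
Qed.

Lemma resolvent_sat a D : D \in partners ->
  (exists2 z, z \in C & a z.1 = z.2) -> (exists2 z, z \in D & a z.1 = z.2) ->
  exists2 z, z \in resolvent D & a z.1 = z.2.
Proof.
case/partnersP => _ _ HxD _ [z1 Hz1 Ha1] [z2 Hz2 Ha2].
case: (eqVneq z1.1 v) => [H1|H1]; last by exists z1; rewrite // in_resolvent Hz1 H1.
case: (eqVneq z2.1 v) => [H2|H2]; last by exists z2; rewrite // in_resolvent Hz2 orbT H2.
case: (lit_of_v H1) => E1; last by move: complx_notin_C; rewrite -E1 Hz1.
case: (lit_of_v H2) => E2; first by move: HxD; rewrite -E2 Hz2.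
by move: Ha1 Ha2; rewrite E1 E2 /= => ->; case: (x.2).
Qed.

Lemma DP_clauseset : is_clauseset (DP v G).
Proof.
apply/forall_inP => E /in_DP [[HE _]|[D HD ->]]; first exact: clauseset_clause HG HE.
have HCD := C_clash_partner HD; case/partnersP: (HD) => HDG _ _ _.
have cC := clauseset_clause HG HC; have cD := clauseset_clause HG HDG.
apply/forall_inP => z; rewrite !in_resolvent => /andP[Hz Hzv].
apply/negP => /andP[Hcz _].
case/orP: Hz => Hz; case/orP: Hcz => Hcz.
- by move: (clause_compl_notin cC Hz); rewrite Hcz.
- have: z \in C :&: compl_set D by rewrite inE Hz in_compl_set.
  by rewrite HCD inE => /eqP Ez; move: Hzv; rewrite Ez Hxv eqxx.
- have: compl z \in C :&: compl_set D by rewrite inE Hcz in_compl_set complK.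
  by rewrite HCD inE => /eqP Ez; move: Hzv; rewrite -[z.1]/((compl z).1) Ez Hxv eqxx.
- by move: (clause_compl_notin cD Hz); rewrite Hcz.
Qed.

(* If [a] satisfies [DP v G] and falsifies [C] off [v], setting [v] along [x]
   satisfies [G]: the resolvents force every partner to be true off [v]. *)
Lemma DP_unsat : ~ satisfiable (DP v G).
Proof.
move=> [a Ha].
have HGn : forall E, E \in G -> v \notin varC E -> exists2 z, z \in E & a z.1 = z.2.
  by move=> E HE Hv; apply: Ha; apply/in_DP; left.
apply: HMU.1; exists (fun u => if u == v then x.2 else a u) => E HE.
case: (boolP (v \in varC E)) => [/var_v_clause [HxE|HcE]|Hv].
- by exists x; rewrite // Hxv eqxx.
- have HD : E \in partners by rewrite inE HE HcE.
  have [z Hz Haz] : exists2 z, z \in resolvent E & a z.1 = z.2.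
    by apply: Ha; apply/in_DP; right; exists E.
  move: Hz; rewrite in_resolvent => /andP[/orP[HzC|HzE] Hzv].
    by move: (C_false_off_v HGn HzC Hzv); rewrite Haz eqxx.
  by exists z; rewrite // ifN.
- case: (HGn E HE Hv) => z Hz Haz; exists z; rewrite // ifN //.
  by apply: contraNneq Hv => <-; apply: mem_varC Hz.
Qed.

Lemma DP_removed_sat E : E \in DP v G -> satisfiable (DP v G :\ E).
Proof.
move=> /in_DP [[HE Hv]|[D0 HD0 ->]].
  have [a Ha] := HMU.2 E HE; exists a => E' /setD1P [ne /in_DP [[HE' _]|[D HD ->]]].
    by apply: Ha; rewrite !inE ne.
  case/partnersP: (HD) => HDG HcD _ _.
  apply: resolvent_sat => //; apply: Ha; rewrite !inE ?HC ?HDG andbT.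
    by apply: contraNneq Hv => <-; apply: v_in_C.
  by apply: contraNneq Hv => <-; rewrite -Hxv; apply: mem_varC HcD.
case/partnersP: (HD0) => HD0G HcD0 _ _.
have [a Ha] := HMU.2 D0 HD0G; exists a => E' /setD1P [ne /in_DP [[HE' Hv]|[D HD ED]]].
  exact: sat_removed_partner_off_v HD0 Ha E' HE' Hv.
case/partnersP: (HD) => HDG _ _ _.
rewrite ED; apply: resolvent_sat => //; apply: Ha; rewrite !inE ?HC ?HDG andbT.
  by case/partnersP: HD0 => _ _ _; rewrite eq_sym.
by apply: contraNneq ne => Ed; rewrite ED Ed.
Qed.

Lemma DP_min_unsat : min_unsat (DP v G).
Proof. by split; [exact: DP_unsat | exact: DP_removed_sat]. Qed.

(* Partners go to their resolvents and the other clauses with [y] stay. *)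
Lemma ldeg_DP_off_C y : y.1 != v -> y \notin C -> ldeg (DP v G) y = ldeg G y.
Proof.
move=> Hyv HyC; rewrite /ldeg.
pose f E := if compl x \in E then resolvent E else E.
have Hnov E : E \in G -> compl x \notin E -> y \in E -> v \notin varC E.
  move=> HE Hc Hy; apply/negP => /var_v_clause [HxE|]; last by rewrite (negbTE Hc).
  by move: HyC; rewrite -(clause_with_x HE HxE) Hy.
have -> : [set E in DP v G | y \in E] = f @: [set E in G | y \in E].
  apply/setP => E; rewrite inE; apply/andP/imsetP.
    case=> [/in_DP [[HE Hv] Hy|[D HD -> Hy]]].
      exists E; first by rewrite inE HE Hy.
      by rewrite /f ifN //; apply: contra Hv => Hc; rewrite -Hxv; apply: mem_varC Hc.
    exists D; last by rewrite /f; case/partnersP: HD => _ -> _ _.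
    case/partnersP: (HD) => HDG _ _ _; move: Hy; rewrite in_resolvent (negbTE HyC) /=.
    by rewrite inE HDG => /andP[->].
  case=> E0; rewrite inE => /andP[HE0 Hy] ->; rewrite /f.
  case: ifP => Hc.
    split; last by rewrite in_resolvent Hy orbT Hyv.
    by apply/in_DP; right; exists E0 => //; rewrite inE HE0 Hc.
  by split => //; apply/in_DP; left; split => //; apply: Hnov => //; rewrite Hc.
rewrite card_in_imset // => E1 E2; rewrite !inE => /andP[H1 Hy1] /andP[H2 Hy2].
rewrite /f; case: ifP => Hc1; case: ifP => Hc2 // Er.
- by apply: resolvent_inj; rewrite // inE ?H1 ?H2 ?Hc1 ?Hc2.
- have HD : E1 \in partners by rewrite inE H1 Hc1.
  by move: (resolvent_fresh HD H2 (Hnov _ H2 (negbT Hc2) Hy2)); rewrite Er eqxx.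
- have HD : E2 \in partners by rewrite inE H2 Hc2.
  by move: (resolvent_fresh HD H1 (Hnov _ H1 (negbT Hc1) Hy1)); rewrite Er eqxx.
Qed.

Lemma ldeg_DP_in_C y : y.1 != v -> y \in C -> 2 <= ldeg (DP v G) y.
Proof.
move=> Hyv HyC; apply: (leq_trans Hk).
have -> : ldeg G (compl x) = #|resolvent @: partners|.
  by rewrite card_in_imset //; apply: resolvent_inj.
apply: subset_leq_card; apply/subsetP => E /imsetP [D HD ->].
by rewrite inE in_resolvent HyC Hyv /= andbT; apply/in_DP; right; exists D.
Qed.

Lemma ldeg_DP_v b : ldeg (DP v G) (v, b) = 0.
Proof.
apply/eqP; rewrite cards_eq0; apply/eqP/setP => E; rewrite in_set in_set0.
apply/negP => /andP[/in_DP [[HE Hv]|[D HD ->]] Hin].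
  by move: Hv; rewrite (mem_varC Hin).
by move: Hin; rewrite in_resolvent eqxx andbF.
Qed.

Lemma sing_lits_DP : sing_lits (DP v G) = sing_lits G :\: C.
Proof.
apply/setP => z; rewrite in_setD !sing_litsE !singular_lit.
case: (eqVneq z.1 v) => [Hz|Hz].
  have -> : ldeg (DP v G) z = 0 by case: z Hz => w b /= ->; apply: ldeg_DP_v.
  case: (lit_of_v Hz) => ->; first by rewrite HxC /= andbF.
  have /negbTE -> : ldeg G (compl x) != 1 by lia.
  by rewrite !andbF.
have Hcz : (compl z).1 != v by [].
case: (boolP (z \in C)) => HzC.
  have /negbTE -> : ldeg (DP v G) z != 1 by have := ldeg_DP_in_C Hz HzC; lia.
  by rewrite andbF.
rewrite (ldeg_DP_off_C Hz HzC).
case: (boolP (compl z \in C)) => HcC; last by rewrite (ldeg_DP_off_C Hcz HcC).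
have := ldeg_DP_in_C Hcz HcC; have := ldeg_gt0 HC HcC.
by case: (eqVneq (ldeg G z) 1) => [->|]; rewrite ?andbF //; lia.
Qed.

Lemma DP_no_one_singular w : ~~ one_singular (DP v G) w.
Proof.
case: (eqVneq w v) => [->|Hw]; first by rewrite /one_singular !ldeg_DP_v.
have := Hno w; rewrite /one_singular.
have Hl (b : bool) : (w, b).1 != v by [].
case: (boolP ((w, true) \in C)) => Ht.
  by have /negbTE -> : ldeg (DP v G) (w, true) != 1 by have := ldeg_DP_in_C (Hl _) Ht; lia.
case: (boolP ((w, false) \in C)) => Hf.
  have /negbTE -> : ldeg (DP v G) (w, false) != 1 by have := ldeg_DP_in_C (Hl _) Hf; lia.
  by rewrite andbF.
by rewrite !ldeg_DP_off_C.
Qed.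

Lemma sing_lits_DP_off_v E : E \in G -> v \notin varC E ->
  E :&: sing_lits (DP v G) = E :&: sing_lits G.
Proof.
move=> HE Hv; apply/setP => z; rewrite sing_lits_DP !in_setI in_setD.
case: (boolP (z \in E)) => //= HzE.
case: (boolP (z \in sing_lits G)) => HzL; rewrite ?andbF ?andbT //.
apply/negP => HzC; move: Hv.
by rewrite (sing_lit_clause_uniq HzL HC HzC HE HzE) v_in_C.
Qed.

Lemma sing_lits_DP_resolvent D : D \in partners ->
  resolvent D :&: sing_lits (DP v G) = D :&: sing_lits G.
Proof.
case/partnersP => HDG HcD HxD HDC.
apply/setP => z; rewrite sing_lits_DP in_setI in_resolvent in_setI in_setD.
case: (boolP (z \in sing_lits G)) => HzL; rewrite ?andbF ?andbT //=.
case: (boolP (z \in C)) => HzC /=; rewrite ?andbF ?andbT //=.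
  apply/esym/negP => HzD; move: HDC.
  by rewrite (sing_lit_clause_uniq HzL HC HzC HDG HzD) eqxx.
case: (boolP (z \in D)) => HzD //=.
apply/negP => /eqP /lit_of_v [Ez|Ez]; first by move: HxD; rewrite -Ez HzD.
by move: HzL; rewrite Ez sing_litsE => /andP[_ /eqP H]; move: Hk; rewrite H.
Qed.

Lemma shyp_edge_neq_C E : E \in G -> E != C -> E :&: sing_lits G != set0 ->
  varC (E :&: sing_lits G) != varC (C :&: sing_lits G).
Proof.
move=> HE ne /set0Pn [z Hz]; apply/eqP => Heq.
have /varCP [z' Hz' Ez] : z.1 \in varC (C :&: sing_lits G) by rewrite -Heq mem_varC.
by move: ne; rewrite (sing_var_clause_uniq Hno HC Hz' HE Hz Ez) eqxx.
Qed.

Lemma shyp_edges_DP :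
  shyp_edges (DP v G) = shyp_edges G :\ varC (C :&: sing_lits G).
Proof.
apply/setP => E'; rewrite in_setD1; apply/imsetP/andP.
  case=> E; rewrite inE => /andP[/in_DP [[HE Hv]|[D HD ->]] Hne] ->.
    have HEC : E != C by apply: contraNneq Hv => ->; apply: v_in_C.
    rewrite sing_lits_DP_off_v // in Hne *; split; first exact: shyp_edge_neq_C.
    by apply/imsetP; exists E; rewrite // inE HE Hne.
  case/partnersP: (HD) => HDG _ _ HDC.
  rewrite sing_lits_DP_resolvent // in Hne *; split; first exact: shyp_edge_neq_C.
  by apply/imsetP; exists D; rewrite // inE HDG Hne.
case=> ne /imsetP [E]; rewrite inE => /andP[HE Hne] EE.
have HEC : E != C by apply: contraNneq ne => EC; rewrite EE EC.
case: (boolP (v \in varC E)) => [/var_v_clause [HxE|HcE]|Hv].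
- by move: HEC; rewrite (clause_with_x HE HxE) eqxx.
- have HD : E \in partners by rewrite inE HE HcE.
  exists (resolvent E); last by rewrite sing_lits_DP_resolvent.
  by rewrite inE sing_lits_DP_resolvent // Hne andbT; apply/in_DP; right; exists E.
- exists E; last by rewrite sing_lits_DP_off_v.
  by rewrite inE sing_lits_DP_off_v // Hne andbT; apply/in_DP; left.
Qed.

End SingularElimination.

Lemma DP_singular_step V (G : {set {set lit V}}) v : is_clauseset G -> min_unsat G ->
  (forall w, ~~ one_singular G w) -> singular G v ->
  [/\ is_clauseset (DP v G), min_unsat (DP v G), (forall w, ~~ one_singular (DP v G) w) &
     exists2 E, E \in shyp_edges G & v \in E /\ shyp_edges (DP v G) = shyp_edges G :\ E].
Proof.
move=> HG HMU Hno Hs.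
have [b [Hdx Hk]] : exists b, ldeg G (v, b) = 1 /\ 2 <= ldeg G (compl (v, b)).
  move: (Hno v) Hs; rewrite /one_singular /singular /compl /=.
  case: (eqVneq (ldeg G (v, true)) 1) => H1 /= H2 H3.
    by exists true; split => //=; lia.
  by exists false; split => /=; lia.
have [C HC HxC] := ldeg1_clause Hdx.
have HxL : (v, b) \in C :&: sing_lits G by rewrite !inE HxC Hs Hdx eqxx.
split.
- by apply: (@DP_clauseset _ _ _ (v, b) C).
- by apply: (@DP_min_unsat _ _ _ (v, b) C).
- by apply: (@DP_no_one_singular _ _ _ (v, b) C).
exists (varC (C :&: sing_lits G)); last split.
- by apply/imsetP; exists C => //; rewrite inE HC; apply/set0Pn; exists (v, b).
- exact: mem_varC HxL.
- by apply: (@shyp_edges_DP _ _ _ (v, b) C).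
Qed.

Section Peeling.
Variable T : finType.
Implicit Types (H : {set {set T}}) (E X : {set T}).

(* Eliminating a singular variable [v] removes from the singularity hypergraph
   the one edge through [v]; [peeling] iterates this until no edge is left. *)
Fixpoint peeling H (s : seq T) : Prop :=
  match s with
  | [::] => H = set0
  | v :: s' => exists2 E, E \in H & v \in E /\ peeling (H :\ E) s'
  end.

Definition exact_transversal H X :=
  (forall u, u \in X -> exists2 E, E \in H & u \in E) /\
  (forall E, E \in H -> exists u, E :&: X = [set u]).

Lemma trivIset_mem_eq H E1 E2 u : trivIset H ->
  E1 \in H -> E2 \in H -> u \in E1 -> u \in E2 -> E1 = E2.
Proof.
move=> /trivIsetP tH H1 H2 u1 u2; apply/eqP/negPn/negP => ne.
by move/disjointFr: (tH _ _ H1 H2 ne) => /(_ u u1); rewrite u2.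
Qed.

Lemma exact_transversal_add H E v X : trivIset H -> E \in H -> v \in E ->
  exact_transversal (H :\ E) X -> v \notin X /\ exact_transversal H (v |: X).
Proof.
move=> Hd HE HvE [HX1 HX2].
have HEX u : u \in E -> u \notin X.
  move=> HuE; apply/negP => HuX; have [E' /setD1P [ne HE'] HuE'] := HX1 u HuX.
  by move: ne; rewrite (trivIset_mem_eq Hd HE' HE HuE' HuE) eqxx.
split; first exact: HEX.
split=> [u /setU1P [->|HuX]|E' HE']; first by exists E.
  by have [E' /setD1P [_ HE'] HuE'] := HX1 u HuX; exists E'.
case: (eqVneq E' E) => [->|ne].
  exists v; apply/setP => u; rewrite !inE.
  case: (eqVneq u v) => [->|nuv] /=; first by rewrite HvE.
  by apply/negP => /andP[/HEX/negP Hn /Hn].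
have [u Hu] : exists u, E' :&: X = [set u] by apply: HX2; rewrite !inE ne.
exists u; rewrite -Hu; apply/setP => w; rewrite !inE.
case: (eqVneq w v) => [->|nwv] //=.
have -> // : (v \in E') = false.
by apply/negP => HvE'; rewrite (trivIset_mem_eq Hd HE' HE HvE' HvE) eqxx in ne.
Qed.

Lemma exact_transversal_remove H v X : trivIset H -> v \notin X ->
  exact_transversal H (v |: X) ->
  exists2 E, E \in H & v \in E /\ exact_transversal (H :\ E) X.
Proof.
move=> Hd HvX [HX1 HX2].
have [E HE HvE] := HX1 v (setU11 v X).
exists E => //; split => //.
have [w Hw] := HX2 E HE.
have Ew : w = v by move/setP: Hw => /(_ v); rewrite !inE HvE eqxx /= => /esym/eqP.
split.
  move=> u HuX; have [E' HE' HuE'] := HX1 u (setU1r v HuX).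
  exists E' => //; rewrite !inE HE' andbT; apply/eqP => EE.
  have : u \in E :&: (v |: X) by rewrite -EE inE HuE' setU1r.
  by rewrite Hw Ew inE => /eqP Euv; rewrite -Euv HuX in HvX.
move=> E' /setD1P [ne HE']; have [u Hu] := HX2 E' HE'; exists u; rewrite -Hu.
apply/setP => z; rewrite !inE.
case: (eqVneq z v) => [->|nzv] //=.
have -> // : (v \in E') = false.
by apply/negP => HvE'; rewrite (trivIset_mem_eq Hd HE' HE HvE' HvE) eqxx in ne.
Qed.

Lemma peelingP s H : trivIset H ->
  (peeling H s <-> uniq s /\ exact_transversal H [set u in s]).
Proof.
elim: s H => [|v s IH] H Hd /=.
  split=> [->|[_ [_ HX]]]; first by split=> //; split=> [u|E]; rewrite !inE.
  apply/setP => E; rewrite inE; apply/negbTE/negP => HE.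
  by case: (HX E HE) => u /setP /(_ u); rewrite !inE eqxx andbF.
have HdE E : trivIset (H :\ E) by apply: trivIsetS Hd; apply: subD1set.
rewrite set_cons; split.
  case=> E HE [HvE /(IH _ (HdE E)) [Hu HX]].
  have [HvX HX'] := exact_transversal_add Hd HE HvE HX.
  by rewrite inE in HvX; rewrite HvX Hu.
case=> /andP[Hvs Hu] HX.
have HvX : v \notin [set u in s] by rewrite inE.
have [E HE [HvE HXE]] := exact_transversal_remove Hd HvX HX.
by exists E => //; split => //; apply/IH.
Qed.

Definition transversal (W : {set T}) H X :=
  X \subset W /\ forall E, E \in H -> E :&: X != set0.

Lemma exact_transversal_min H (W : {set T}) X : (forall E, E \in H -> E \subset W) ->
  exact_transversal H X ->
  transversal W H X /\ forall X', X' \proper X -> ~ transversal W H X'.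
Proof.
move=> HW [HX1 HX2]; split.
  split.
    by apply/subsetP => u /HX1 [E HE HuE]; apply: (subsetP (HW E HE)).
  by move=> E /HX2 [u ->]; apply/set0Pn; exists u; rewrite inE.
move=> X' /properP [Hsub [t HtX HtX']] [_ HX'].
have [E HE HtE] := HX1 t HtX; have [u Hu] := HX2 E HE.
have /set0Pn [w /setIP [HwE HwX']] := HX' E HE.
have : w \in E :&: X by rewrite inE HwE (subsetP Hsub).
have : t \in E :&: X by rewrite inE HtE HtX.
by rewrite Hu !inE => /eqP Et /eqP Ew; move: HtX'; rewrite Et -Ew HwX'.
Qed.

(* In a minimal transversal, a vertex on no edge, or whose edges all meet [X]
   elsewhere, could be dropped. *)
Lemma min_transversal_exact H (W : {set T}) X : trivIset H -> transversal W H X ->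
  (forall X', X' \proper X -> ~ transversal W H X') -> exact_transversal H X.
Proof.
move=> Hd [HXW HX] Hmin.
have drop u : u \in X ->
    (forall E, E \in H -> u \in E -> exists2 w, w \in E :&: X & w != u) -> False.
  move=> Hu Hoth; apply: (Hmin (X :\ u)); first exact: properD1.
  split; first exact: subset_trans (subD1set X u) HXW.
  move=> E HE; apply/set0Pn.
  case: (boolP (u \in E)) => HuE.
    have [w Hw ne] := Hoth E HE HuE; exists w.
    by move: Hw; rewrite !inE ne => /andP[-> ->].
  have /set0Pn [w Hw] := HX E HE; exists w.
  move: Hw; rewrite !inE => /andP[HwE ->]; rewrite HwE andbT.
  by apply: contraNneq HuE => <-.
split.
  move=> u Hu; case: (boolP [exists E in H, u \in E]) => [/exists_inP [E HE HuE]|Hn].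
    by exists E.
  exfalso; apply: (drop u Hu) => E HE HuE; case/negP: Hn.
  by apply/exists_inP; exists E.
move=> E HE; have /set0Pn [w Hw] := HX E HE; exists w.
apply/setP => u; apply/idP/idP; last by rewrite inE => /eqP ->.
move=> /setIP [HuE HuX]; rewrite inE; apply/negPn/negP => ne; apply: (drop u HuX).
move=> E' HE' HuE'; exists w; last by rewrite eq_sym.
by rewrite (trivIset_mem_eq Hd HE' HE HuE' HuE).
Qed.

End Peeling.

Section SingularityHypergraph.
Variable V : finType.
Implicit Types (G : {set {set lit V}}) (E : {set V}).

Lemma shyp_edgesP G E : E \in shyp_edges G ->
  exists2 C, C \in G & E = varC (C :&: sing_lits G).
Proof. by case/imsetP => C; rewrite inE => /andP[HC _] ->; exists C. Qed.

Lemma shyp_edges_trivIset G : (forall w, ~~ one_singular G w) -> trivIset (shyp_edges G).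
Proof.
move=> Hno; apply/trivIsetP => _ _ /shyp_edgesP [C1 H1 ->] /shyp_edgesP [C2 H2 ->] ne.
rewrite -setI_eq0; apply/set0Pn => [[u /setIP [/varCP [z1 Hz1 <-] /varCP [z2 Hz2 Ez]]]].
by rewrite (sing_var_clause_uniq Hno H1 Hz1 H2 Hz2 (esym Ez)) eqxx in ne.
Qed.

Lemma shyp_edge_singular G E v : E \in shyp_edges G -> v \in E -> singular G v.
Proof.
case/shyp_edgesP => C _ -> /varCP [z /setIP [_]].
by rewrite sing_litsE => /andP[Hs _] <-.
Qed.

Lemma shyp_edge_sub G E : E \in shyp_edges G -> E \subset varF G.
Proof.
case/shyp_edgesP => C HC ->; apply/subsetP => u /varCP [z /setIP [Hz _] <-].
by apply/bigcupP; exists C => //; apply: mem_varC Hz.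
Qed.

Lemma nonsingular_shyp_edges G : nonsingular G <-> shyp_edges G = set0.
Proof.
split=> [Hn|H0 w].
  apply/setP => E; rewrite inE; apply/negbTE/negP.
  case/imsetP => C; rewrite inE => /andP[_ /set0Pn [z /setIP [_ Hz]]] _.
  by move: Hz (Hn z.1); rewrite sing_litsE => /andP[->].
apply/negP => Hs.
have [b Hb] : exists b, ldeg G (w, b) = 1.
  move: Hs; rewrite /singular.
  by case: (eqVneq (ldeg G (w, true)) 1) => H1; [exists true | exists false; lia].
have [C HC HzC] := ldeg1_clause Hb.
have : varC (C :&: sing_lits G) \in shyp_edges G.
  apply/imsetP; exists C => //; rewrite inE HC; apply/set0Pn; exists (w, b).
  by rewrite !inE HzC Hs Hb eqxx.
by rewrite H0 inE.
Qed.

Lemma maximal_singular_tuple_peeling s G : is_clauseset G -> min_unsat G ->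
  (forall w, ~~ one_singular G w) ->
  (maximal_singular_tuple G s <-> peeling (shyp_edges G) s).
Proof.
rewrite /maximal_singular_tuple.
elim: s G => [|v s IH] G HG HMU Hno /=; first by rewrite -nonsingular_shyp_edges; tauto.
split.
  move=> [[Hs Ht] Hn].
  have [HG' HMU' Hno' [E HE [HvE Heq]]] := DP_singular_step HG HMU Hno Hs.
  by exists E => //; split => //; rewrite -Heq; apply/IH.
move=> [E HE [HvE HR]].
have Hs := shyp_edge_singular HE HvE.
have [HG' HMU' Hno' [E0 HE0 [HvE0 Heq]]] := DP_singular_step HG HMU Hno Hs.
have EE : E0 = E by apply: trivIset_mem_eq (shyp_edges_trivIset Hno) HE0 HE HvE0 HvE.
have [Ht Hn] : singular_tuple (DP v G) s /\ nonsingular (DPs s (DP v G)).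
  by apply/IH => //; rewrite Heq EE.
by split; [split|].
Qed.

End SingularityHypergraph.

Theorem lemma57 (V : finType) (F : {set {set lit V}}) :
  is_clauseset F -> min_unsat F -> (forall v : V, ~~ one_singular F v) ->
  (forall T : {set V},
     (exists s : seq V, maximal_singular_tuple F s /\ T = [set x in s])
     <-> is_min_transversal F T) /\
  (forall s : seq V,
     maximal_singular_tuple F s <-> (uniq s /\ is_min_transversal F [set x in s])).
Proof.
move=> HF HMU Hno.
have tuplesP s : maximal_singular_tuple F s <-> uniq s /\ is_min_transversal F [set x in s].
  rewrite maximal_singular_tuple_peeling // peelingP; last exact: shyp_edges_trivIset.
  split=> [[Hu /(exact_transversal_min (@shyp_edge_sub _ F))] | [Hu [HT Hmin]]] //.
  by split=> //; apply: min_transversal_exact (shyp_edges_trivIset Hno) HT Hmin.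
split=> // T; split=> [[s [/tuplesP [_ HT] ->]] // | HT].
have ET : [set x in enum T] = T by apply/setP => u; rewrite inE mem_enum.
by exists (enum T); rewrite ET; split=> //; apply/tuplesP; rewrite ET enum_uniq.
Qed.
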